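(* Let $\Gamma(t)$ be a differentiable motion of nondegenerate oriented m-triangles with constant angular momentum $\mathbf\Omega$, and let $\mathfrak F(t)=(\mathbf u_1(t),\mathbf u_2(t),\mathbf n(t))$ be a continuously varying moving eigenframe. Then the functions $$g_1=\mathbf\Omega\cdot\mathbf u_1,\quad g_2=\mathbf\Omega\cdot\mathbf u_2,\quad g_3=\mathbf\Omega\cdot\mathbf n$$ satisfy $$\dot g_1=g_2\Big[\Big(\frac1{\lambda_3}-\frac1{\lambda_2}\Big)g_3+\frac12\dot\theta\cos\varphi\Big],\quad \dot g_2=g_1\Big[\Big(\frac1{\lambda_1}-\frac1{\lambda_3}\Big)g_3-\frac12\dot\theta\cos\varphi\Big],\quad \dot g_3=g_1g_2\Big(\frac1{\lambda_2}-\frac1{\lambda_1}\Big),$$ where $\lambda_1(t),\lambda_2(t),\lambda_3(t)$ are the eigenvalues of the inertia tensor of $\Gamma(t)$ associated with $\mathbf u_1,\mathbf u_2,\mathbf n$, and these depend solely on the moduli curve $\bar\Gamma(t)=(\rho(t),\varphi(t),\theta(t))$.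
   Context: Masses $m_1,m_2,m_3>0$, $m_1+m_2+m_3=1$. An oriented m-triangle is $(\mathbf X,\mathbf n)$, $\mathbf X=(\mathbf a_1,\mathbf a_2,\mathbf a_3)$, $\mathbf a_i\in\mathbb R^3$, $\sum m_i\mathbf a_i=0$, $\mathbf n$ a unit vector perpendicular to the $\mathbf a_i$; nondegenerate means the $\mathbf a_i$ span a plane. Angular momentum: $\mathbf\Omega=\sum m_i\mathbf a_i\times\dot{\mathbf a}_i$. Inertia tensor: $B_{\mathbf X}(\mathbf u,\mathbf v)=\sum m_j(\mathbf u\times\mathbf a_j)\cdot(\mathbf v\times\mathbf a_j)$. An eigenframe is a positive orthonormal frame $(\mathbf u_1,\mathbf u_2,\mathbf n)$ with $\mathbf u_1,\mathbf u_2$ in the plane of the triangle, $\mathbf u_1\times\mathbf u_2=\mathbf n$, consisting of eigenvectors of $B_{\mathbf X}$; $\lambda_i=B_{\mathbf X}(\mathbf u_i,\mathbf u_i)$ for $i=1,2$ and $\lambda_3=B_{\mathbf X}(\mathbf n,\mathbf n)=I=\sum m_i|\mathbf a_i|^2=\rho^2$; one has $\{\lambda_1,\lambda_2\}=\frac I2(1\pm\sin\varphi)$. Here $(\varphi,\theta)$ are spherical coordinates on the shape space (oriented m-triangles of size $I=1$ modulo rotation, a round sphere with the kinematic metric $\frac14(d\varphi^2+\sin^2\varphi\,d\theta^2)$): $\varphi$ is the colatitude measured from the north pole, which is the shape of the positively oriented m-triangle with $I_j=m_j|\mathbf a_j|^2=(1-m_j)/2$, and $\theta$ is the longitude, increasing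 in the positive direction of the equator (collinear shapes) as oriented by the northern hemisphere of positively oriented shapes. The moduli curve $\bar\Gamma$ is the image of $\Gamma$ modulo rotations, described by $(\rho,\varphi,\theta)$. *)

From Stdlib Require Import Reals.
From Coquelicot Require Import Coquelicot.
Open Scope R_scope.

Record vec3 := mkV { vx : R; vy : R; vz : R }.

Definition vzero : vec3 := mkV 0 0 0.
Definition vadd (u v : vec3) : vec3 := mkV (vx u + vx v) (vy u + vy v) (vz u + vz v).
Definition vsub (u v : vec3) : vec3 := mkV (vx u - vx v) (vy u - vy v) (vz u - vz v).
Definition vscale (c : R) (u : vec3) : vec3 := mkV (c * vx u) (c * vy u) (c * vz u).
Definition dot (u v : vec3) : R := vx u * vx v + vy u * vy v + vz u * vz v.
Definition cross (u v : vec3) : vec3 :=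
  mkV (vy u * vz v - vz u * vy v) (vz u * vx v - vx u * vz v) (vx u * vy v - vy u * vx v).

Definition vderiv (f : R -> vec3) (t : R) : vec3 :=
  mkV (Derive (fun s => vx (f s)) t) (Derive (fun s => vy (f s)) t)
      (Derive (fun s => vz (f s)) t).
Definition vdifferentiable_at (f : R -> vec3) (t : R) : Prop :=
  ex_derive (fun s => vx (f s)) t /\ ex_derive (fun s => vy (f s)) t /\
  ex_derive (fun s => vz (f s)) t.
Definition vcontinuous_at (f : R -> vec3) (t : R) : Prop :=
  continuous (fun s => vx (f s)) t /\ continuous (fun s => vy (f s)) t /\
  continuous (fun s => vz (f s)) t.

Definition oriented_mtriangle (m1 m2 m3 : R) (a1 a2 a3 n : vec3) : Prop :=
  vadd (vadd (vscale m1 a1) (vscale m2 a2)) (vscale m3 a3) = vzero /\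
  dot n n = 1 /\ dot n a1 = 0 /\ dot n a2 = 0 /\ dot n a3 = 0.

(* nondegenerate: the a_i span a plane (their linear span has dimension >= 2,
   hence exactly 2 since they are all perpendicular to n) *)
Definition nondegenerate (a1 a2 a3 : vec3) : Prop :=
  cross a1 a2 <> vzero \/ cross a2 a3 <> vzero \/ cross a1 a3 <> vzero.

Definition inertia (m1 m2 m3 : R) (a1 a2 a3 : vec3) (u v : vec3) : R :=
  m1 * dot (cross u a1) (cross v a1) + m2 * dot (cross u a2) (cross v a2)
  + m3 * dot (cross u a3) (cross v a3).

Definition moment (m1 m2 m3 : R) (a1 a2 a3 : vec3) : R :=
  m1 * dot a1 a1 + m2 * dot a2 a2 + m3 * dot a3 a3.

Definition ang_mom (m1 m2 m3 : R) (a1 a2 a3 : R -> vec3) (t : R) : vec3 :=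
  vadd (vadd (vscale m1 (cross (a1 t) (vderiv a1 t)))
             (vscale m2 (cross (a2 t) (vderiv a2 t))))
       (vscale m3 (cross (a3 t) (vderiv a3 t))).

(* u is an eigenvector of the symmetric bilinear form B_X, with eigenvalue B_X(u,u)
   (u is taken of unit length in an eigenframe) *)
Definition B_eigenvector (m1 m2 m3 : R) (a1 a2 a3 u : vec3) : Prop :=
  forall v, inertia m1 m2 m3 a1 a2 a3 u v = inertia m1 m2 m3 a1 a2 a3 u u * dot u v.

Definition is_eigenframe (m1 m2 m3 : R) (a1 a2 a3 u1 u2 n : vec3) : Prop :=
  dot u1 u1 = 1 /\ dot u2 u2 = 1 /\ dot u1 u2 = 0 /\
  dot u1 n = 0 /\ dot u2 n = 0 /\ cross u1 u2 = n /\
  B_eigenvector m1 m2 m3 a1 a2 a3 u1 /\ B_eigenvector m1 m2 m3 a1 a2 a3 u2 /\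
  B_eigenvector m1 m2 m3 a1 a2 a3 n.

(* Mass-weighted Jacobi vectors zeta1 = sqrt(mu1) (a2 - a1),
   zeta2 = sqrt(mu2) (a3 - (m1 a1 + m2 a2)/(m1+m2)),
   mu1 = m1 m2/(m1+m2), mu2 = m3 (m1+m2); then I = |zeta1|^2 + |zeta2|^2. *)
Definition jacobi1 (m1 m2 m3 : R) (a1 a2 a3 : vec3) : vec3 :=
  vscale (sqrt (m1 * m2 / (m1 + m2))) (vsub a2 a1).
Definition jacobi2 (m1 m2 m3 : R) (a1 a2 a3 : vec3) : vec3 :=
  vscale (sqrt (m3 * (m1 + m2)))
         (vsub a3 (vscale (/ (m1 + m2)) (vadd (vscale m1 a1) (vscale m2 a2)))).

(* Hopf map: the shape of the oriented m-triangle is the point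
   (X, Y, Z)/I of the unit sphere, X^2 + Y^2 + Z^2 = I^2, where
   X = |zeta1|^2 - |zeta2|^2, Y = 2 zeta1.zeta2, Z = 2 (zeta1 x zeta2).n.
   Z > 0 exactly for positively oriented triangles, and the north pole
   (X = Y = 0, Z = I) is the positively oriented shape with
   m_j |a_j|^2 = (1 - m_j)/2 I.  Spherical coordinates:
   X = I sin(phi) cos(theta), Y = I sin(phi) sin(theta), Z = I cos(phi). *)
Definition shapeX (m1 m2 m3 : R) (a1 a2 a3 n : vec3) : R :=
  dot (jacobi1 m1 m2 m3 a1 a2 a3) (jacobi1 m1 m2 m3 a1 a2 a3)
  - dot (jacobi2 m1 m2 m3 a1 a2 a3) (jacobi2 m1 m2 m3 a1 a2 a3).
Definition shapeY (m1 m2 m3 : R) (a1 a2 a3 n : vec3) : R :=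
  2 * dot (jacobi1 m1 m2 m3 a1 a2 a3) (jacobi2 m1 m2 m3 a1 a2 a3).
Definition shapeZ (m1 m2 m3 : R) (a1 a2 a3 n : vec3) : R :=
  2 * dot (cross (jacobi1 m1 m2 m3 a1 a2 a3) (jacobi2 m1 m2 m3 a1 a2 a3)) n.

Definition colatitude (m1 m2 m3 : R) (a1 a2 a3 n : vec3) : R :=
  acos (shapeZ m1 m2 m3 a1 a2 a3 n / moment m1 m2 m3 a1 a2 a3).
Definition size_rho (m1 m2 m3 : R) (a1 a2 a3 : vec3) : R :=
  sqrt (moment m1 m2 m3 a1 a2 a3).

Definition is_longitude_at (m1 m2 m3 : R) (a1 a2 a3 n : R -> vec3)
    (theta : R -> R) (t : R) : Prop :=
  let I := moment m1 m2 m3 (a1 t) (a2 t) (a3 t) in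
  let phi := colatitude m1 m2 m3 (a1 t) (a2 t) (a3 t) (n t) in
  shapeX m1 m2 m3 (a1 t) (a2 t) (a3 t) (n t) = I * sin phi * cos (theta t) /\
  shapeY m1 m2 m3 (a1 t) (a2 t) (a3 t) (n t) = I * sin phi * sin (theta t).

From Stdlib Require Import Reals Lra Psatz.
From Coquelicot Require Import Coquelicot.
Open Scope R_scope.

(* The eigenframe is differentiable: [n] is the unit normal of a plane spanned by two
   differentiable vectors, and off the poles the two planar eigenvalues
   [lambda = (I -/+ sqrt (X^2 + Y^2)) / 2] are distinct and differentiable, so [u1] is the
   normalization of the differentiable vector [(S - lambda1 P) u1(t0)], [S] the mass-weighted
   second moment and [P] the projection onto the plane; then [u2 = n x u1].
   Write the frame velocity through the rates [alpha = u1'.n], [beta = u2'.n],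
   [gamma = u1'.u2]. In the eigenframe the angular momentum has components [g1 = beta lambda1]
   and [g2 = - alpha lambda2], while differentiating the vanishing product of inertia
   [S(u1, u2) = 0] and the longitude relation [X sin theta = Y cos theta], computed in Jacobi
   coordinates, gives [gamma I = g3 + Z theta' / 2]. Since
   [g' = (g2 gamma + g3 alpha, - g1 gamma + g3 beta, - g1 alpha - g2 beta)], [lambda3 = I] and
   [cos phi = Z / I], these are the stated equations. *)

(** * Vector algebra and orthonormal frames *)

Ltac vsimpl := unfold dot, cross, vadd, vsub, vscale, vzero in *; simpl in *.

Lemma dot_comm u v : dot u v = dot v u.
Proof. vsimpl; ring. Qed.
Lemma dot_vadd_l u v w : dot (vadd u v) w = dot u w + dot v w.
Proof. vsimpl; ring. Qed.
Lemma dot_vsub_l u v w : dot (vsub u v) w = dot u w - dot v w.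
Proof. vsimpl; ring. Qed.
Lemma dot_vscale_l c u w : dot (vscale c u) w = c * dot u w.
Proof. vsimpl; ring. Qed.
Lemma dot_vscale_r c u w : dot w (vscale c u) = c * dot w u.
Proof. vsimpl; ring. Qed.
Lemma dot_vzero_l w : dot vzero w = 0.
Proof. vsimpl; ring. Qed.

Lemma dot_cross_cross u v w z :
  dot (cross u v) (cross w z) = dot u w * dot v z - dot u z * dot v w.
Proof. destruct u, v, w, z; vsimpl; ring. Qed.

Lemma cross_cross u v w : cross u (cross v w) = vsub (vscale (dot u w) v) (vscale (dot u v) w).
Proof. destruct u, v, w; vsimpl; f_equal; ring. Qed.

Lemma cross_antisym u v : cross u v = vscale (-1) (cross v u).
Proof. destruct u, v; vsimpl; f_equal; ring. Qed.

Lemma dot_self_eq0 w : dot w w = 0 -> w = vzero.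
Proof.
  destruct w as [x y z]; vsimpl; intros H.
  replace x with 0 by nra; replace y with 0 by nra; replace z with 0 by nra; reflexivity.
Qed.

Lemma cross_vscale_eq0 c u : cross (vscale c u) u = vzero.
Proof. destruct u; vsimpl; f_equal; ring. Qed.

Definition orthonormal_frame (e1 e2 e3 : vec3) : Prop :=
  dot e1 e1 = 1 /\ dot e2 e2 = 1 /\ dot e3 e3 = 1 /\
  dot e1 e2 = 0 /\ dot e1 e3 = 0 /\ dot e2 e3 = 0 /\ cross e1 e2 = e3.

Section OrthonormalFrame.

Variables e1 e2 e3 : vec3.
Hypothesis F : orthonormal_frame e1 e2 e3.

Lemma frame_cross23 : cross e2 e3 = e1.
Proof.
  destruct F as (H1 & H2 & _ & H12 & _ & _ & <-).
  rewrite cross_cross, (dot_comm e2 e1), H12, H2.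
  destruct e1, e2; vsimpl; f_equal; ring.
Qed.

Lemma frame_cross31 : cross e3 e1 = e2.
Proof.
  destruct F as (H1 & _ & _ & H12 & _ & _ & <-).
  rewrite cross_antisym, cross_cross, H12, H1.
  destruct e1, e2; vsimpl; f_equal; ring.
Qed.

Lemma dot_frame v w :
  dot v w = dot v e1 * dot w e1 + dot v e2 * dot w e2 + dot v e3 * dot w e3.
Proof.
  destruct F as (H1 & H2 & _ & H12 & _ & _ & C).
  assert (G : dot v (cross e1 e2) * dot w (cross e1 e2) =
              dot v w * (dot e1 e1 * dot e2 e2 - dot e1 e2 * dot e1 e2)
              - dot v e1 * (dot e1 w * dot e2 e2 - dot e1 e2 * dot e2 w)
              + dot v e2 * (dot e1 w * dot e1 e2 - dot e1 e1 * dot e2 w))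
    by (destruct v, w, e1, e2; vsimpl; ring).
  rewrite C, H1, H2, H12, (dot_comm e1 w), (dot_comm e2 w) in G.
  lra.
Qed.

Lemma dot_frame_planar v w : dot v e3 = 0 ->
  dot v w = dot v e1 * dot w e1 + dot v e2 * dot w e2.
Proof. intros H; rewrite dot_frame, H; ring. Qed.

Lemma frame_coords_eq0 w : dot w e1 = 0 -> dot w e2 = 0 -> dot w e3 = 0 -> w = vzero.
Proof. intros H1 H2 H3; apply dot_self_eq0; rewrite dot_frame, H1, H2, H3; ring. Qed.

Lemma frame_ext v w :
  dot v e1 = dot w e1 -> dot v e2 = dot w e2 -> dot v e3 = dot w e3 -> v = w.
Proof.
  intros H1 H2 H3.
  assert (D : vsub v w = vzero) by (apply frame_coords_eq0; rewrite dot_vsub_l; lra).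
  destruct v, w; vsimpl; injection D; intros; f_equal; lra.
Qed.

Lemma dot_cross_e1 v w : dot (cross v w) e1 = dot v e2 * dot w e3 - dot v e3 * dot w e2.
Proof. rewrite <- frame_cross23 at 1; apply dot_cross_cross. Qed.

Lemma dot_cross_e2 v w : dot (cross v w) e2 = dot v e3 * dot w e1 - dot v e1 * dot w e3.
Proof. rewrite <- frame_cross31 at 1; apply dot_cross_cross. Qed.

Lemma dot_cross_e3 v w : dot (cross v w) e3 = dot v e1 * dot w e2 - dot v e2 * dot w e1.
Proof. destruct F as (_ & _ & _ & _ & _ & _ & <-); apply dot_cross_cross. Qed.

Lemma cross_planar_eq0 v w : dot e3 v = 0 -> dot e3 w = 0 ->
  dot v e1 * dot w e2 - dot v e2 * dot w e1 = 0 -> cross v w = vzero.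
Proof.
  intros Hv Hw H; rewrite (dot_comm e3) in Hv, Hw.
  apply frame_coords_eq0; [rewrite dot_cross_e1 | rewrite dot_cross_e2 | rewrite dot_cross_e3];
    rewrite ?Hv, ?Hw; lra.
Qed.

End OrthonormalFrame.

(** * Calculus of vector-valued functions *)

Lemma is_derive_eq (f : R -> R) t l l' : is_derive f t l -> l = l' -> is_derive f t l'.
Proof. now intros H <-. Qed.

Lemma is_derive_Rplus (f g : R -> R) t df dg : is_derive f t df -> is_derive g t dg ->
  is_derive (fun s => f s + g s) t (df + dg).
Proof. apply (is_derive_plus f g). Qed.

Lemma is_derive_Rminus (f g : R -> R) t df dg : is_derive f t df -> is_derive g t dg ->
  is_derive (fun s => f s - g s) t (df - dg).
Proof. apply (is_derive_minus f g). Qed.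

Lemma is_derive_Rmult (f g : R -> R) t df dg : is_derive f t df -> is_derive g t dg ->
  is_derive (fun s => f s * g s) t (df * g t + f t * dg).
Proof. intros; apply (is_derive_mult f g); auto; intros; apply Rmult_comm. Qed.

Lemma is_derive_locally_const (f : R -> R) t c l :
  locally t (fun s => f s = c) -> is_derive f t l -> l = 0.
Proof.
  intros L D.
  apply (is_derive_ext_loc _ (fun _ => c)) in D; [|exact L].
  rewrite <- (is_derive_unique _ _ _ D); apply is_derive_unique, (is_derive_const c).
Qed.

Lemma locally_open_interval ta tb t : ta < t < tb -> locally t (fun s => ta < s < tb).
Proof.
  intros H; apply (locally_open (fun s => ta < s < tb)); auto.
  apply open_and; [apply open_gt | apply open_lt].
Qed.

Lemma locally_sign_sqrt (h q : R -> R) t :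
  continuous h t -> h t <> 0 -> locally t (fun s => q s = h s ^ 2) ->
  exists sg, (sg = 1 \/ sg = -1) /\ locally t (fun s => h s = sg * sqrt (q s) /\ h s <> 0).
Proof.
  intros C N L.
  destruct (Rdichotomy _ _ N) as [Hn | Hp].
  - exists (-1); split; [now right|].
    assert (Ln : locally t (fun s => h s < 0))
      by (apply (C (fun u => u < 0)), (locally_open (fun u => u < 0)); auto; apply open_lt).
    apply (filter_imp (fun s => q s = h s ^ 2 /\ h s < 0)); [|now apply filter_and].
    intros s [-> Hs]; replace (h s ^ 2) with ((- h s) ^ 2) by ring.
    rewrite sqrt_pow2 by lra; split; lra.
  - exists 1; split; [now left|].
    assert (Lp : locally t (fun s => 0 < h s))
      by (apply C, (locally_open (fun u => 0 < u)); auto; apply open_gt).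
    apply (filter_imp (fun s => q s = h s ^ 2 /\ 0 < h s)); [|now apply filter_and].
    intros s [-> Hs]; rewrite sqrt_pow2 by lra; split; lra.
Qed.

Definition is_vderive (f : R -> vec3) (t : R) (v : vec3) : Prop :=
  is_derive (fun s => vx (f s)) t (vx v) /\ is_derive (fun s => vy (f s)) t (vy v) /\
  is_derive (fun s => vz (f s)) t (vz v).

Lemma is_vderive_vderiv f t : vdifferentiable_at f t -> is_vderive f t (vderiv f t).
Proof. intros (A & B & C); split; [|split]; apply Derive_correct; auto. Qed.

Lemma is_vderive_vdifferentiable f t v : is_vderive f t v -> vdifferentiable_at f t.
Proof. intros (A & B & C); split; [|split]; eexists; eauto. Qed.

Lemma is_vderive_const c t : is_vderive (fun _ => c) t vzero.
Proof. split; [|split]; apply (is_derive_const (_ : R)). Qed.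

Lemma is_vderive_add f g t v w : is_vderive f t v -> is_vderive g t w ->
  is_vderive (fun s => vadd (f s) (g s)) t (vadd v w).
Proof. intros (A & B & C) (D & E & F); split; [|split]; apply is_derive_Rplus; auto. Qed.

Lemma is_vderive_sub f g t v w : is_vderive f t v -> is_vderive g t w ->
  is_vderive (fun s => vsub (f s) (g s)) t (vsub v w).
Proof. intros (A & B & C) (D & E & F); split; [|split]; apply is_derive_Rminus; auto. Qed.

Lemma is_vderive_scale (h : R -> R) f t dh v : is_derive h t dh -> is_vderive f t v ->
  is_vderive (fun s => vscale (h s) (f s)) t (vadd (vscale dh (f t)) (vscale (h t) v)).
Proof. intros H (A & B & C); split; [|split]; apply is_derive_Rmult; auto. Qed.

Lemma is_vderive_scale_const c f t v : is_vderive f t v ->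
  is_vderive (fun s => vscale c (f s)) t (vscale c v).
Proof. intros (A & B & C); split; [|split]; apply is_derive_scal; auto. Qed.

Lemma is_vderive_cross f g t v w : is_vderive f t v -> is_vderive g t w ->
  is_vderive (fun s => cross (f s) (g s)) t (vadd (cross v (g t)) (cross (f t) w)).
Proof.
  intros (A & B & C) (D & E & F);
    split; [|split]; (eapply is_derive_eq; [apply is_derive_Rminus; apply is_derive_Rmult; eauto|]);
    simpl; ring.
Qed.

Lemma is_derive_dot f g t v w : is_vderive f t v -> is_vderive g t w ->
  is_derive (fun s => dot (f s) (g s)) t (dot v (g t) + dot (f t) w).
Proof.
  intros (A & B & C) (D & E & F); unfold dot.
  eapply is_derive_eq;
    [apply is_derive_Rplus; [apply is_derive_Rplus|]; apply is_derive_Rmult; eauto|]; simpl; ring.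
Qed.

Lemma is_derive_dot_const c f t v : is_vderive f t v ->
  is_derive (fun s => dot c (f s)) t (dot c v).
Proof.
  intros D; eapply is_derive_eq;
    [exact (is_derive_dot (fun _ => c) f t vzero v (is_vderive_const c t) D) |
     rewrite dot_vzero_l; simpl; ring].
Qed.

Lemma is_vderive_ext_loc f g t v :
  locally t (fun s => f s = g s) -> is_vderive f t v -> is_vderive g t v.
Proof.
  intros L (A & B & C); split; [|split]; (eapply is_derive_ext_loc; [|eauto]);
    apply (filter_imp _ _ (fun s E => f_equal _ E) L).
Qed.

Lemma vdifferentiable_continuous f t : vdifferentiable_at f t -> vcontinuous_at f t.
Proof.
  intros (A & B & C); split; [|split];
    apply (ex_derive_continuous (K := R_AbsRing) (V := R_NormedModule)); auto.
Qed.

Lemma continuous_Rplus (f g : R -> R) t : continuous f t -> continuous g t ->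
  continuous (fun s => f s + g s) t.
Proof. apply (continuous_plus f g). Qed.

Lemma continuous_Rminus (f g : R -> R) t : continuous f t -> continuous g t ->
  continuous (fun s => f s - g s) t.
Proof. apply (continuous_minus f g). Qed.

Lemma continuous_Rmult (f g : R -> R) t : continuous f t -> continuous g t ->
  continuous (fun s => f s * g s) t.
Proof. apply (continuous_mult f g). Qed.

Lemma continuous_dot f g t : vcontinuous_at f t -> vcontinuous_at g t ->
  continuous (fun s => dot (f s) (g s)) t.
Proof.
  intros (A & B & C) (D & E & F); unfold dot;
    repeat apply continuous_Rplus; apply continuous_Rmult; auto.
Qed.

Lemma is_vderive_locally_const f t c v :
  locally t (fun s => f s = c) -> is_vderive f t v -> v = vzero.
Proof.
  intros L (Dx & Dy & Dz).
  assert (K : forall (p : vec3 -> R) (Dp : is_derive (fun s => p (f s)) t (p v)), p v = 0)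
    by (intros p Dp; apply (is_derive_locally_const (fun s => p (f s)) t (p c)); [|exact Dp];
        exact (filter_imp _ _ (fun s E => f_equal p E) L)).
  pose proof (K vx Dx); pose proof (K vy Dy); pose proof (K vz Dz).
  destruct v; simpl in *; subst; reflexivity.
Qed.

Lemma dot_velocity_locally_const p q t P Q c :
  locally t (fun s => dot (p s) (q s) = c) -> is_vderive p t P -> is_vderive q t Q ->
  dot P (q t) + dot (p t) Q = 0.
Proof.
  intros L Dp Dq; exact (is_derive_locally_const _ t c _ L (is_derive_dot _ _ _ _ _ Dp Dq)).
Qed.

Lemma cross_eq0_parallel e u : dot u u = 1 -> cross e u = vzero -> e = vscale (dot u e) u.
Proof.
  intros U C; pose proof (cross_cross u e u) as B; rewrite C, U in B.
  destruct e, u; vsimpl; injection B; intros; f_equal; lra.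
Qed.

Lemma unit_parallel_vdifferentiable (e u : R -> vec3) t :
  vdifferentiable_at e t -> vcontinuous_at u t -> e t <> vzero ->
  locally t (fun s => dot (u s) (u s) = 1 /\ cross (e s) (u s) = vzero) ->
  vdifferentiable_at u t.
Proof.
  intros De Cu Ne L.
  set (h := fun s => dot (u s) (e s)).
  set (q := fun s => dot (e s) (e s)).
  assert (Par : locally t (fun s => e s = vscale (h s) (u s) /\ q s = h s ^ 2)).
  { eapply filter_imp; [|exact L]; intros s [U C].
    assert (E : e s = vscale (h s) (u s)) by (now apply cross_eq0_parallel).
    split; [exact E|]; unfold q; rewrite E, dot_vscale_l, dot_vscale_r, U; ring. }
  assert (Ht : h t <> 0).
  { intros H0; apply Ne; destruct (locally_singleton _ _ Par) as [-> _]; rewrite H0.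
    destruct (u t); vsimpl; f_equal; ring. }
  destruct (locally_sign_sqrt h q t) as (sg & Hsg & Lh); auto.
  - now apply continuous_dot, vdifferentiable_continuous.
  - exact (filter_imp _ _ (fun s H => proj2 H) Par).
  - set (k := fun s => / (sg * sqrt (q s))).
    assert (Hq : 0 < q t).
    { destruct (locally_singleton _ _ Par) as [_ ->].
      apply pow2_gt_0, Ht. }
    assert (Dk : ex_derive k t).
    { eexists; apply is_derive_inv.
      - apply is_derive_scal, (is_derive_sqrt q); [|exact Hq].
        apply is_derive_dot; apply is_vderive_vderiv, De.
      - apply Rmult_integral_contrapositive; split;
          [destruct Hsg; lra | apply Rgt_not_eq, sqrt_lt_R0, Hq]. }
    destruct Dk as (dk & Dk).
    eapply is_vderive_vdifferentiable, (is_vderive_ext_loc (fun s => vscale (k s) (e s)));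
      [|exact (is_vderive_scale _ _ _ _ _ Dk (is_vderive_vderiv _ _ De))].
    eapply filter_imp; [|exact (filter_and _ _ Par Lh)]; intros s [[E _] [Eh Nh]].
    unfold k; rewrite E, <- Eh; destruct (u s); vsimpl; f_equal; field; exact Nh.
Qed.

Lemma unit_normal_vdifferentiable (p q e : R -> vec3) t :
  vdifferentiable_at p t -> vdifferentiable_at q t -> vcontinuous_at e t ->
  cross (p t) (q t) <> vzero ->
  locally t (fun s => dot (e s) (e s) = 1 /\ dot (e s) (p s) = 0 /\ dot (e s) (q s) = 0) ->
  vdifferentiable_at e t.
Proof.
  intros Dp Dq Ce Npq L.
  apply (unit_parallel_vdifferentiable (fun s => cross (p s) (q s))); auto.
  - exact (is_vderive_vdifferentiable _ _ _
             (is_vderive_cross _ _ _ _ _ (is_vderive_vderiv _ _ Dp) (is_vderive_vderiv _ _ Dq))).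
  - eapply filter_imp; [|exact L]; intros s (E & Ep & Eq); split; [exact E|].
    rewrite cross_antisym, cross_cross, Ep, Eq; destruct (p s), (q s); vsimpl; f_equal; ring.
Qed.

(** * Mass-weighted second moments and principal frames *)

Lemma acos_sphere X Y Z r : X ^ 2 + Y ^ 2 + Z ^ 2 = r ^ 2 -> 0 < r ->
  cos (acos (Z / r)) = Z / r /\ sin (acos (Z / r)) = sqrt (X ^ 2 + Y ^ 2) / r.
Proof.
  intros E Hr.
  assert (B : -1 <= Z / r <= 1).
  { split; [apply (Rmult_le_reg_r r) | apply (Rmult_le_reg_r r)]; auto;
      unfold Rdiv; rewrite Rmult_assoc, Rinv_l; nra. }
  split; [now apply cos_acos|].
  rewrite sin_acos by exact B.
  replace (1 - (Z / r)²) with ((sqrt (X ^ 2 + Y ^ 2) / r) ^ 2).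
  - apply sqrt_pow2, Rmult_le_pos; [apply sqrt_pos | apply Rlt_le, Rinv_0_lt_compat, Hr].
  - unfold Rdiv; rewrite Rpow_mult_distr, pow2_sqrt by nra; unfold Rsqr.
    replace (X ^ 2 + Y ^ 2) with (r ^ 2 - Z ^ 2) by lra; field; lra.
Qed.

Definition mass_centered (m1 m2 m3 : R) (a1 a2 a3 : vec3) : Prop :=
  vadd (vadd (vscale m1 a1) (vscale m2 a2)) (vscale m3 a3) = vzero.

Definition second_moment (m1 m2 m3 : R) (a1 a2 a3 b1 b2 b3 v w : vec3) : R :=
  m1 * (dot a1 v * dot b1 w) + m2 * (dot a2 v * dot b2 w) + m3 * (dot a3 v * dot b3 w).

Definition second_moment_vec (m1 m2 m3 : R) (a1 a2 a3 v : vec3) : vec3 :=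
  vadd (vadd (vscale (m1 * dot a1 v) a1) (vscale (m2 * dot a2 v) a2)) (vscale (m3 * dot a3 v) a3).

Lemma dot_second_moment_vec m1 m2 m3 a1 a2 a3 v w :
  dot (second_moment_vec m1 m2 m3 a1 a2 a3 v) w = second_moment m1 m2 m3 a1 a2 a3 a1 a2 a3 v w.
Proof. unfold second_moment_vec, second_moment; rewrite !dot_vadd_l, !dot_vscale_l; ring. Qed.

Lemma second_moment_nonneg_terms m1 m2 m3 a1 a2 a3 v : 0 < m1 -> 0 < m2 -> 0 < m3 ->
  0 <= m1 * (dot a1 v * dot a1 v) /\ 0 <= m2 * (dot a2 v * dot a2 v) /\
  0 <= m3 * (dot a3 v * dot a3 v).
Proof. intros; repeat split; apply Rmult_le_pos; nra. Qed.

Lemma second_moment_nonneg m1 m2 m3 a1 a2 a3 v : 0 < m1 -> 0 < m2 -> 0 < m3 ->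
  0 <= second_moment m1 m2 m3 a1 a2 a3 a1 a2 a3 v v.
Proof.
  intros H1 H2 H3; unfold second_moment.
  pose proof (second_moment_nonneg_terms m1 m2 m3 a1 a2 a3 v); lra.
Qed.

Lemma second_moment_eq0 m1 m2 m3 a1 a2 a3 v : 0 < m1 -> 0 < m2 -> 0 < m3 ->
  second_moment m1 m2 m3 a1 a2 a3 a1 a2 a3 v v = 0 ->
  dot a1 v = 0 /\ dot a2 v = 0 /\ dot a3 v = 0.
Proof.
  unfold second_moment; intros H1 H2 H3 E.
  pose proof (second_moment_nonneg_terms m1 m2 m3 a1 a2 a3 v H1 H2 H3).
  repeat split; apply Rsqr_0_uniq; unfold Rsqr; nra.
Qed.

Lemma inertia_second_moment m1 m2 m3 a1 a2 a3 u v :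
  inertia m1 m2 m3 a1 a2 a3 u v =
  dot u v * moment m1 m2 m3 a1 a2 a3 - second_moment m1 m2 m3 a1 a2 a3 a1 a2 a3 u v.
Proof.
  unfold inertia, moment, second_moment.
  rewrite !dot_cross_cross, (dot_comm u a1), (dot_comm u a2), (dot_comm u a3); ring.
Qed.

Lemma mass_centered_dot m1 m2 m3 a1 a2 a3 v : mass_centered m1 m2 m3 a1 a2 a3 ->
  m1 * dot a1 v + m2 * dot a2 v + m3 * dot a3 v = 0.
Proof. intros H; rewrite <- (dot_vzero_l v), <- H, !dot_vadd_l, !dot_vscale_l; ring. Qed.

Lemma jacobi_bilinear m1 m2 m3 x1 x2 x3 y1 y2 y3 :
  0 < m1 -> 0 < m2 -> 0 < m3 -> m1 + m2 + m3 = 1 ->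
  m1 * x1 + m2 * x2 + m3 * x3 = 0 -> m1 * y1 + m2 * y2 + m3 * y3 = 0 ->
  m1 * (x1 * y1) + m2 * (x2 * y2) + m3 * (x3 * y3) =
  sqrt (m1 * m2 / (m1 + m2)) * (x2 - x1) * (sqrt (m1 * m2 / (m1 + m2)) * (y2 - y1)) +
  sqrt (m3 * (m1 + m2)) * (x3 - / (m1 + m2) * (m1 * x1 + m2 * x2)) *
  (sqrt (m3 * (m1 + m2)) * (y3 - / (m1 + m2) * (m1 * y1 + m2 * y2))).
Proof.
  intros H1 H2 H3 S X Y.
  transitivity (sqrt (m1 * m2 / (m1 + m2)) ^ 2 * (x2 - x1) * (y2 - y1) +
    sqrt (m3 * (m1 + m2)) ^ 2 * (x3 - / (m1 + m2) * (m1 * x1 + m2 * x2)) *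
    (y3 - / (m1 + m2) * (m1 * y1 + m2 * y2))); [|ring].
  rewrite !pow2_sqrt
    by (unfold Rdiv; apply Rmult_le_pos; [nra | apply Rlt_le, Rinv_0_lt_compat; lra] || nra).
  replace x3 with (- (m1 * x1 + m2 * x2) / m3) by (field_simplify_eq; lra).
  replace y3 with (- (m1 * y1 + m2 * y2) / m3) by (field_simplify_eq; lra).
  replace m3 with (1 - m1 - m2) by lra; field; split; lra.
Qed.

Lemma second_moment_jacobi m1 m2 m3 a1 a2 a3 b1 b2 b3 v w :
  0 < m1 -> 0 < m2 -> 0 < m3 -> m1 + m2 + m3 = 1 ->
  mass_centered m1 m2 m3 a1 a2 a3 -> mass_centered m1 m2 m3 b1 b2 b3 ->
  second_moment m1 m2 m3 a1 a2 a3 b1 b2 b3 v w =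
  dot (jacobi1 m1 m2 m3 a1 a2 a3) v * dot (jacobi1 m1 m2 m3 b1 b2 b3) w +
  dot (jacobi2 m1 m2 m3 a1 a2 a3) v * dot (jacobi2 m1 m2 m3 b1 b2 b3) w.
Proof.
  intros H1 H2 H3 S Ca Cb; unfold second_moment, jacobi1, jacobi2.
  rewrite !dot_vscale_l, !dot_vsub_l, !dot_vscale_l, !dot_vadd_l, !dot_vscale_l.
  apply jacobi_bilinear; auto; apply mass_centered_dot; auto.
Qed.

Definition principal_frame (m1 m2 m3 : R) (a1 a2 a3 e1 e2 e3 : vec3) : Prop :=
  orthonormal_frame e1 e2 e3 /\ dot e3 a1 = 0 /\ dot e3 a2 = 0 /\ dot e3 a3 = 0 /\
  mass_centered m1 m2 m3 a1 a2 a3 /\ second_moment m1 m2 m3 a1 a2 a3 a1 a2 a3 e1 e2 = 0.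

Lemma eigenframe_principal_frame m1 m2 m3 a1 a2 a3 u1 u2 n :
  oriented_mtriangle m1 m2 m3 a1 a2 a3 n -> is_eigenframe m1 m2 m3 a1 a2 a3 u1 u2 n ->
  principal_frame m1 m2 m3 a1 a2 a3 u1 u2 n.
Proof.
  intros (C & Nn & N1 & N2 & N3) (F11 & F22 & F12 & F1n & F2n & Fc & E1 & _).
  repeat split; auto.
  specialize (E1 u2); rewrite F12, Rmult_0_r, inertia_second_moment, F12 in E1; lra.
Qed.

Section PrincipalFrame.

Variables (m1 m2 m3 : R) (a1 a2 a3 e1 e2 e3 : vec3).
Hypotheses (Hm1 : 0 < m1) (Hm2 : 0 < m2) (Hm3 : 0 < m3) (Hm : m1 + m2 + m3 = 1).
Hypothesis P : principal_frame m1 m2 m3 a1 a2 a3 e1 e2 e3.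

Local Notation S v w := (second_moment m1 m2 m3 a1 a2 a3 a1 a2 a3 v w).
Local Notation I := (moment m1 m2 m3 a1 a2 a3).
Local Notation J1 := (jacobi1 m1 m2 m3 a1 a2 a3).
Local Notation J2 := (jacobi2 m1 m2 m3 a1 a2 a3).
Local Notation X := (shapeX m1 m2 m3 a1 a2 a3 e3).
Local Notation Y := (shapeY m1 m2 m3 a1 a2 a3 e3).
Local Notation Z := (shapeZ m1 m2 m3 a1 a2 a3 e3).

Lemma principal_planar v : dot e3 v = 0 ->
  forall w, dot v w = dot v e1 * dot w e1 + dot v e2 * dot w e2.
Proof.
  destruct P as (F & _); intros H w; apply (dot_frame_planar e1 e2 e3 F); now rewrite dot_comm.
Qed.

Lemma principal_second_moment v w :
  S v w = dot v e1 * dot w e1 * S e1 e1 + dot v e2 * dot w e2 * S e2 e2.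
Proof.
  destruct P as (_ & N1 & N2 & N3 & _ & S12).
  unfold second_moment in *.
  rewrite (principal_planar a1 N1 v), (principal_planar a1 N1 w), (principal_planar a2 N2 v),
    (principal_planar a2 N2 w), (principal_planar a3 N3 v), (principal_planar a3 N3 w).
  match type of S12 with ?E = 0 =>
    transitivity ((dot v e1 * dot w e2 + dot v e2 * dot w e1) * E + dot v e1 * dot w e1 *
      (m1 * (dot a1 e1 * dot a1 e1) + m2 * (dot a2 e1 * dot a2 e1) + m3 * (dot a3 e1 * dot a3 e1)) +
      dot v e2 * dot w e2 *
      (m1 * (dot a1 e2 * dot a1 e2) + m2 * (dot a2 e2 * dot a2 e2) + m3 * (dot a3 e2 * dot a3 e2)));
    [ring | rewrite S12; ring]
  end.
Qed.

Lemma principal_moment : I = S e1 e1 + S e2 e2.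
Proof.
  destruct P as (_ & N1 & N2 & N3 & _).
  unfold moment, second_moment.
  rewrite (principal_planar a1 N1 a1), (principal_planar a2 N2 a2), (principal_planar a3 N3 a3); ring.
Qed.

Lemma principal_inertia_e1 : inertia m1 m2 m3 a1 a2 a3 e1 e1 = S e2 e2.
Proof. destruct P as ((F11 & _) & _); rewrite inertia_second_moment, F11, principal_moment; ring. Qed.

Lemma principal_inertia_e2 : inertia m1 m2 m3 a1 a2 a3 e2 e2 = S e1 e1.
Proof.
  destruct P as ((_ & F22 & _) & _); rewrite inertia_second_moment, F22, principal_moment; ring.
Qed.

Lemma principal_inertia_e3 : inertia m1 m2 m3 a1 a2 a3 e3 e3 = I.
Proof.
  destruct P as ((_ & _ & F33 & _ & F13 & F23 & _) & _).
  rewrite inertia_second_moment, principal_second_moment, F33, !(dot_comm e3), F13, F23; ring.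
Qed.

Lemma jacobi_planar : dot J1 e3 = 0 /\ dot J2 e3 = 0.
Proof.
  destruct P as (_ & N1 & N2 & N3 & _); unfold jacobi1, jacobi2.
  rewrite !dot_vscale_l, !dot_vsub_l, !dot_vscale_l, !dot_vadd_l, !dot_vscale_l, !(dot_comm _ e3),
    N1, N2, N3; split; ring.
Qed.

Lemma principal_second_moment_jacobi v w : S v w = dot J1 v * dot J1 w + dot J2 v * dot J2 w.
Proof. destruct P as (_ & _ & _ & _ & C & _); now apply second_moment_jacobi. Qed.

Lemma shape_frame :
  X = dot J1 e1 ^ 2 + dot J1 e2 ^ 2 - dot J2 e1 ^ 2 - dot J2 e2 ^ 2 /\
  Y = 2 * (dot J1 e1 * dot J2 e1 + dot J1 e2 * dot J2 e2) /\
  Z = 2 * (dot J1 e1 * dot J2 e2 - dot J1 e2 * dot J2 e1).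
Proof.
  destruct P as (F & _); destruct jacobi_planar as [H1 H2].
  unfold shapeX, shapeY, shapeZ.
  rewrite (dot_cross_e3 e1 e2 e3 F), (dot_frame_planar e1 e2 e3 F J1 J1 H1),
    (dot_frame_planar e1 e2 e3 F J1 J2 H1), (dot_frame_planar e1 e2 e3 F J2 J2 H2);
    repeat split; ring.
Qed.

Lemma principal_shape_radius : X ^ 2 + Y ^ 2 = (S e1 e1 - S e2 e2) ^ 2.
Proof.
  destruct P as (_ & _ & _ & _ & _ & S12); destruct shape_frame as (-> & -> & _).
  rewrite principal_second_moment_jacobi in S12; rewrite !principal_second_moment_jacobi.
  apply Rminus_diag_uniq; match type of S12 with ?E = 0 =>
    transitivity (4 * E * E); [ring | rewrite S12; ring] end.
Qed.

Lemma principal_shape_sphere : X ^ 2 + Y ^ 2 + Z ^ 2 = I ^ 2.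
Proof.
  destruct shape_frame as (-> & -> & ->).
  rewrite principal_moment, !principal_second_moment_jacobi; ring.
Qed.

Lemma principal_second_moment_pos : nondegenerate a1 a2 a3 -> 0 < S e1 e1 /\ 0 < S e2 e2.
Proof.
  destruct P as (F & N1 & N2 & N3 & _).
  assert (K : forall v w, dot e3 v = 0 -> dot e3 w = 0 -> cross v w <> vzero ->
              dot v e1 * dot w e2 - dot v e2 * dot w e1 <> 0)
    by (intros v w Hv Hw Nvw E; now apply Nvw, (cross_planar_eq0 e1 e2 e3 F)).
  assert (Pos : forall v, S v v <> 0 -> 0 < S v v)
    by (intros v H; pose proof (second_moment_nonneg m1 m2 m3 a1 a2 a3 v Hm1 Hm2 Hm3); lra).
  intros [ND | [ND | ND]];
    [pose proof (K a1 a2 N1 N2 ND) as Kp | pose proof (K a2 a3 N2 N3 ND) as Kp |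
     pose proof (K a1 a3 N1 N3 ND) as Kp];
    split; apply Pos; intros E; apply second_moment_eq0 in E as (E1 & E2 & E3); auto;
    apply Kp; rewrite ?E1, ?E2, ?E3; ring.
Qed.

Lemma principal_second_moment_vec v :
  vsub (second_moment_vec m1 m2 m3 a1 a2 a3 v) (vscale (S e2 e2) (vsub v (vscale (dot e3 v) e3))) =
  vscale ((S e1 e1 - S e2 e2) * dot v e1) e1.
Proof.
  destruct P as (F & _); pose proof F as (F11 & F22 & F33 & F12 & F13 & F23 & _).
  apply (frame_ext e1 e2 e3 F);
    rewrite !dot_vsub_l, !dot_vscale_l, dot_vsub_l, dot_vscale_l, dot_second_moment_vec,
      principal_second_moment,
      (dot_comm e3 v), ?F11, ?F22, ?F33, ?F12, ?F13, ?F23, ?(dot_comm e2 e1),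
      ?(dot_comm e3 e1), ?(dot_comm e3 e2), ?F12, ?F13, ?F23; ring.
Qed.

Lemma principal_eigenvalues : nondegenerate a1 a2 a3 ->
  let l1 := inertia m1 m2 m3 a1 a2 a3 e1 e1 in
  let l2 := inertia m1 m2 m3 a1 a2 a3 e2 e2 in
  let rho := size_rho m1 m2 m3 a1 a2 a3 in
  let phi := colatitude m1 m2 m3 a1 a2 a3 e3 in
  inertia m1 m2 m3 a1 a2 a3 e3 e3 = rho ^ 2 /\
  ((l1 = rho ^ 2 / 2 * (1 + sin phi) /\ l2 = rho ^ 2 / 2 * (1 - sin phi)) \/
   (l1 = rho ^ 2 / 2 * (1 - sin phi) /\ l2 = rho ^ 2 / 2 * (1 + sin phi))).
Proof.
  intros ND l1 l2 rho phi.
  destruct (principal_second_moment_pos ND) as [P1 P2].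
  assert (HI : 0 < I) by (rewrite principal_moment; lra).
  assert (Hrho : rho ^ 2 = I) by (apply pow2_sqrt; lra).
  assert (Hsin : sin phi = sqrt ((S e1 e1 - S e2 e2) ^ 2) / I).
  { destruct (acos_sphere _ _ _ _ principal_shape_sphere HI) as [_ Hs].
    unfold phi, colatitude; rewrite Hs, principal_shape_radius; reflexivity. }
  unfold l1, l2; rewrite principal_inertia_e1, principal_inertia_e2, principal_inertia_e3, Hrho, Hsin.
  split; [reflexivity|].
  destruct (Rle_lt_dec (S e2 e2) (S e1 e1)).
  - rewrite sqrt_pow2 by lra; right; rewrite principal_moment; split; field; lra.
  - replace ((S e1 e1 - S e2 e2) ^ 2) with ((S e2 e2 - S e1 e1) ^ 2) by ring.
    rewrite sqrt_pow2 by lra; left; rewrite principal_moment; split; field; lra.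
Qed.

End PrincipalFrame.

(** * The Euler equations at one instant *)

(* [(c, d)] and [(e, f)] are the Jacobi vectors in the frame [(e1, e2)], [(c', d')] and [(e', f')]
   their velocities; [ga] is the rotation rate of the frame, [G3] the normal component of the
   angular momentum and [th1] the longitude rate. *)
Lemma jacobi_rotation_rate (c d e f c' d' e' f' ga G3 th1 X Y dX dY : R) :
  c * d + e * f = 0 ->
  X = c ^ 2 + d ^ 2 - e ^ 2 - f ^ 2 -> Y = 2 * (c * e + d * f) ->
  dX = 2 * (c * c' + d * d' - e * e' - f * f') -> dY = 2 * (c' * e + c * e' + d' * f + d * f') ->
  0 < X ^ 2 + Y ^ 2 -> th1 * (X ^ 2 + Y ^ 2) = X * dY - Y * dX ->
  ga * ((c ^ 2 + e ^ 2) - (d ^ 2 + f ^ 2)) = c' * d + c * d' + e' * f + e * f' ->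
  G3 = c * d' - d * c' + e * f' - f * e' ->
  ga * ((c ^ 2 + e ^ 2) + (d ^ 2 + f ^ 2)) = G3 + (c * f - d * e) * th1.
Proof.
  intros S -> -> -> -> Hpos Hth Hga ->.
  set (dl := (c ^ 2 + e ^ 2) - (d ^ 2 + f ^ 2)) in *.
  assert (R2 : (c ^ 2 + d ^ 2 - e ^ 2 - f ^ 2) ^ 2 + (2 * (c * e + d * f)) ^ 2 = dl ^ 2)
    by (unfold dl; transitivity (((c ^ 2 + e ^ 2) - (d ^ 2 + f ^ 2)) ^ 2 + 4 * (c * d + e * f) ^ 2);
        [ring | rewrite S; ring]).
  rewrite R2 in Hth, Hpos.
  assert (D : dl <> 0) by (intros D; rewrite D in Hpos; lra).
  replace ga with ((c' * d + c * d' + e' * f + e * f') / dl) by (rewrite <- Hga; field; exact D).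
  replace th1 with (((c ^ 2 + d ^ 2 - e ^ 2 - f ^ 2) * (2 * (c' * e + c * e' + d' * f + d * f')) -
    2 * (c * e + d * f) * (2 * (c * c' + d * d' - e * e' - f * f'))) / dl ^ 2)
    by (rewrite <- Hth; field; exact D).
  unfold dl in *.
  destruct (Req_dec c 0) as [C0 | C0].
  - subst c; assert (E : e = 0 \/ f = 0) by (apply Rmult_integral; lra).
    destruct E; subst; field; lra.
  - replace d with (- (e * f) / c) in * by (field_simplify_eq; lra).
    field; split; [exact C0|].
    contradict D; apply (Rmult_eq_reg_r (c ^ 2)); [rewrite Rmult_0_l, <- D; field; exact C0 | nra].
Qed.

Definition frame_velocity (e1 e2 e3 U1 U2 N : vec3) : Prop :=
  dot U1 e1 = 0 /\ dot U2 e2 = 0 /\ dot N e3 = 0 /\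
  dot U1 e2 + dot e1 U2 = 0 /\ dot U1 e3 + dot e1 N = 0 /\ dot U2 e3 + dot e2 N = 0.

(* The derivative at [t] of each identity defining [principal_frame] along a motion. *)
Definition principal_frame_velocity (m1 m2 m3 : R) (a1 a2 a3 e1 e2 e3 A1 A2 A3 U1 U2 N : vec3) :
    Prop :=
  frame_velocity e1 e2 e3 U1 U2 N /\
  dot N a1 + dot e3 A1 = 0 /\ dot N a2 + dot e3 A2 = 0 /\ dot N a3 + dot e3 A3 = 0 /\
  mass_centered m1 m2 m3 A1 A2 A3 /\
  second_moment m1 m2 m3 A1 A2 A3 a1 a2 a3 e1 e2 + second_moment m1 m2 m3 a1 a2 a3 A1 A2 A3 e1 e2 +
  second_moment m1 m2 m3 a1 a2 a3 a1 a2 a3 U1 e2 + second_moment m1 m2 m3 a1 a2 a3 a1 a2 a3 e1 U2 = 0.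

Section EulerEquations.

Variables (m1 m2 m3 : R) (a1 a2 a3 e1 e2 e3 A1 A2 A3 U1 U2 N Om : vec3) (th1 : R).
Hypotheses (Hm1 : 0 < m1) (Hm2 : 0 < m2) (Hm3 : 0 < m3) (Hm : m1 + m2 + m3 = 1).
Hypothesis P : principal_frame m1 m2 m3 a1 a2 a3 e1 e2 e3.
Hypothesis V : principal_frame_velocity m1 m2 m3 a1 a2 a3 e1 e2 e3 A1 A2 A3 U1 U2 N.
Hypothesis ND : nondegenerate a1 a2 a3.
Hypothesis HOm :
  Om = vadd (vadd (vscale m1 (cross a1 A1)) (vscale m2 (cross a2 A2))) (vscale m3 (cross a3 A3)).

Local Notation S := (second_moment m1 m2 m3 a1 a2 a3 a1 a2 a3).
Local Notation I := (moment m1 m2 m3 a1 a2 a3).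
Local Notation J1 := (jacobi1 m1 m2 m3 a1 a2 a3).
Local Notation J2 := (jacobi2 m1 m2 m3 a1 a2 a3).
Local Notation J1' := (jacobi1 m1 m2 m3 A1 A2 A3).
Local Notation J2' := (jacobi2 m1 m2 m3 A1 A2 A3).
Local Notation X := (shapeX m1 m2 m3 a1 a2 a3 e3).
Local Notation Y := (shapeY m1 m2 m3 a1 a2 a3 e3).
Local Notation Z := (shapeZ m1 m2 m3 a1 a2 a3 e3).
Local Notation al := (dot U1 e3).
Local Notation be := (dot U2 e3).
Local Notation ga := (dot U1 e2).

Hypothesis Hpole : 0 < X ^ 2 + Y ^ 2.
Hypothesis Hth : th1 * (X ^ 2 + Y ^ 2) =
  X * (2 * (dot J1' J2 + dot J1 J2')) - Y * (dot J1' J1 + dot J1 J1' - (dot J2' J2 + dot J2 J2')).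

Lemma frame_velocity_skew : dot U2 e1 = - ga /\ dot N e1 = - al /\ dot N e2 = - be.
Proof.
  destruct V as ((_ & _ & _ & H12 & H13 & H23) & _).
  rewrite !(dot_comm _ N), !(dot_comm e1) in *; lra.
Qed.

Lemma planar_dot_velocity a : dot e3 a = 0 ->
  dot a U1 = ga * dot a e2 /\ dot a U2 = - ga * dot a e1 /\ dot N a = - al * dot a e1 - be * dot a e2.
Proof.
  intros Ha; destruct V as ((U11 & U22 & _) & _).
  destruct frame_velocity_skew as (U21 & N1 & N2).
  rewrite (dot_comm N), (principal_planar m1 m2 m3 a1 a2 a3 e1 e2 e3 P a Ha U1),
    (principal_planar m1 m2 m3 a1 a2 a3 e1 e2 e3 P a Ha U2),
    (principal_planar m1 m2 m3 a1 a2 a3 e1 e2 e3 P a Ha N), U11, U22, U21, N1, N2.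
  repeat split; ring.
Qed.

Lemma normal_velocity :
  dot A1 e3 = al * dot a1 e1 + be * dot a1 e2 /\ dot A2 e3 = al * dot a2 e1 + be * dot a2 e2 /\
  dot A3 e3 = al * dot a3 e1 + be * dot a3 e2.
Proof.
  destruct P as (_ & N1 & N2 & N3 & _); destruct V as (_ & V1 & V2 & V3 & _).
  destruct (planar_dot_velocity a1 N1) as (_ & _ & W1).
  destruct (planar_dot_velocity a2 N2) as (_ & _ & W2).
  destruct (planar_dot_velocity a3 N3) as (_ & _ & W3).
  rewrite (dot_comm A1), (dot_comm A2), (dot_comm A3); repeat split; lra.
Qed.

Lemma angular_momentum_e1 : dot Om e1 = be * S e2 e2.
Proof.
  destruct P as (F & N1 & N2 & N3 & _ & S12); destruct normal_velocity as (V1 & V2 & V3).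
  rewrite HOm, !dot_vadd_l, !dot_vscale_l, !(dot_cross_e1 e1 e2 e3 F), V1, V2, V3,
    (dot_comm a1 e3), (dot_comm a2 e3), (dot_comm a3 e3), N1, N2, N3.
  transitivity (al * S e1 e2 + be * S e2 e2); [unfold second_moment; ring | rewrite S12; ring].
Qed.

Lemma angular_momentum_e2 : dot Om e2 = - al * S e1 e1.
Proof.
  destruct P as (F & N1 & N2 & N3 & _ & S12); destruct normal_velocity as (V1 & V2 & V3).
  rewrite HOm, !dot_vadd_l, !dot_vscale_l, !(dot_cross_e2 e1 e2 e3 F), V1, V2, V3,
    (dot_comm a1 e3), (dot_comm a2 e3), (dot_comm a3 e3), N1, N2, N3.
  transitivity (- al * S e1 e1 - be * S e1 e2); [unfold second_moment; ring | rewrite S12; ring].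
Qed.

Lemma angular_momentum_e3 :
  dot Om e3 = second_moment m1 m2 m3 a1 a2 a3 A1 A2 A3 e1 e2 -
              second_moment m1 m2 m3 a1 a2 a3 A1 A2 A3 e2 e1.
Proof.
  destruct P as (F & _).
  rewrite HOm, !dot_vadd_l, !dot_vscale_l, !(dot_cross_e3 e1 e2 e3 F); unfold second_moment; ring.
Qed.

Lemma rotation_rate_second_moment :
  ga * (S e1 e1 - S e2 e2) =
  second_moment m1 m2 m3 A1 A2 A3 a1 a2 a3 e1 e2 + second_moment m1 m2 m3 a1 a2 a3 A1 A2 A3 e1 e2.
Proof.
  destruct P as (_ & N1 & N2 & N3 & _); destruct V as (_ & _ & _ & _ & _ & DS).
  destruct (planar_dot_velocity a1 N1) as (W1 & W1' & _).
  destruct (planar_dot_velocity a2 N2) as (W2 & W2' & _).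
  destruct (planar_dot_velocity a3 N3) as (W3 & W3' & _).
  unfold second_moment in *; rewrite W1, W2, W3, W1', W2', W3' in DS; lra.
Qed.

Lemma rotation_rate : ga * I = dot Om e3 + / 2 * Z * th1.
Proof.
  destruct P as (F & _ & _ & _ & C & S12); destruct V as (_ & _ & _ & _ & CA & _).
  destruct (jacobi_planar m1 m2 m3 a1 a2 a3 e1 e2 e3 P) as [P1 P2].
  destruct (shape_frame m1 m2 m3 a1 a2 a3 e1 e2 e3 P) as (EX & EY & EZ).
  pose proof rotation_rate_second_moment as Hga.
  pose proof angular_momentum_e3 as HG.
  assert (Jaa : forall v w, S v w = dot J1 v * dot J1 w + dot J2 v * dot J2 w)
    by (intros; apply second_moment_jacobi; auto).
  assert (JAa : forall v w, second_moment m1 m2 m3 A1 A2 A3 a1 a2 a3 v w =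
                            dot J1' v * dot J1 w + dot J2' v * dot J2 w)
    by (intros; apply second_moment_jacobi; auto).
  assert (JaA : forall v w, second_moment m1 m2 m3 a1 a2 a3 A1 A2 A3 v w =
                            dot J1 v * dot J1' w + dot J2 v * dot J2' w)
    by (intros; apply second_moment_jacobi; auto).
  rewrite Jaa in S12; rewrite !Jaa, JAa, JaA in Hga; rewrite !JaA in HG.
  rewrite (principal_moment m1 m2 m3 a1 a2 a3 e1 e2 e3 P), !Jaa, EZ.
  assert (EdX : dot J1' J1 + dot J1 J1' - (dot J2' J2 + dot J2 J2') =
                2 * (dot J1 e1 * dot J1' e1 + dot J1 e2 * dot J1' e2 -
                     dot J2 e1 * dot J2' e1 - dot J2 e2 * dot J2' e2))
    by (rewrite (dot_comm J1' J1), (dot_comm J2' J2), (dot_frame_planar e1 e2 e3 F J1 J1' P1),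
          (dot_frame_planar e1 e2 e3 F J2 J2' P2); ring).
  assert (EdY : 2 * (dot J1' J2 + dot J1 J2') =
                2 * (dot J1' e1 * dot J2 e1 + dot J1 e1 * dot J2' e1 +
                     dot J1' e2 * dot J2 e2 + dot J1 e2 * dot J2' e2))
    by (rewrite (dot_comm J1' J2), (dot_frame_planar e1 e2 e3 F J2 J1' P2),
          (dot_frame_planar e1 e2 e3 F J1 J2' P1); ring).
  pose proof (jacobi_rotation_rate (dot J1 e1) (dot J1 e2) (dot J2 e1) (dot J2 e2)
    (dot J1' e1) (dot J1' e2) (dot J2' e1) (dot J2' e2) ga (dot Om e3) th1 _ _ _ _
    S12 EX EY EdX EdY Hpole Hth) as K.
  transitivity (ga * ((dot J1 e1 ^ 2 + dot J2 e1 ^ 2) + (dot J1 e2 ^ 2 + dot J2 e2 ^ 2))); [ring|].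
  rewrite K; [field | | rewrite HG; ring].
  match type of Hga with ?L = _ => transitivity L; [ring | rewrite Hga; ring] end.
Qed.

Lemma euler_frame_equations :
  let l1 := inertia m1 m2 m3 a1 a2 a3 e1 e1 in
  let l2 := inertia m1 m2 m3 a1 a2 a3 e2 e2 in
  let l3 := inertia m1 m2 m3 a1 a2 a3 e3 e3 in
  let phi := colatitude m1 m2 m3 a1 a2 a3 e3 in
  dot Om U1 = dot Om e2 * ((/ l3 - / l2) * dot Om e3 + / 2 * th1 * cos phi) /\
  dot Om U2 = dot Om e1 * ((/ l1 - / l3) * dot Om e3 - / 2 * th1 * cos phi) /\
  dot Om N = dot Om e1 * dot Om e2 * (/ l2 - / l1).
Proof.
  intros l1 l2 l3 phi.
  destruct P as (F & _); destruct V as ((U11 & U22 & NN & _) & _).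
  destruct frame_velocity_skew as (U21 & N1 & N2).
  destruct (principal_second_moment_pos m1 m2 m3 a1 a2 a3 e1 e2 e3 Hm1 Hm2 Hm3 P ND) as [P1 P2].
  assert (HI : 0 < I) by (rewrite (principal_moment m1 m2 m3 a1 a2 a3 e1 e2 e3 P); lra).
  assert (Hcos : cos phi = Z / I)
    by (apply (acos_sphere X Y); [apply (principal_shape_sphere m1 m2 m3 a1 a2 a3 e1 e2 e3) | ]; auto).
  unfold l1, l2, l3.
  rewrite (principal_inertia_e1 m1 m2 m3 a1 a2 a3 e1 e2 e3 P),
    (principal_inertia_e2 m1 m2 m3 a1 a2 a3 e1 e2 e3 P),
    (principal_inertia_e3 m1 m2 m3 a1 a2 a3 e1 e2 e3 P), Hcos.
  rewrite (dot_frame e1 e2 e3 F Om U1), (dot_frame e1 e2 e3 F Om U2), (dot_frame e1 e2 e3 F Om N),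
    U11, U22, U21, NN, N1, N2.
  assert (Eal : al = - dot Om e2 / S e1 e1) by (rewrite angular_momentum_e2; field; lra).
  assert (Ebe : be = dot Om e1 / S e2 e2) by (rewrite angular_momentum_e1; field; lra).
  assert (Ega : ga = (dot Om e3 + / 2 * Z * th1) / I) by (rewrite <- rotation_rate; field; lra).
  rewrite Eal, Ebe, Ega; repeat split; field; lra.
Qed.

End EulerEquations.

(** * The moving eigenframe *)

Section MotionDerivatives.

Variables (m1 m2 m3 : R) (a1 a2 a3 : R -> vec3) (t : R) (A1 A2 A3 : vec3).
Hypotheses (D1 : is_vderive a1 t A1) (D2 : is_vderive a2 t A2) (D3 : is_vderive a3 t A3).

Lemma is_vderive_jacobi1 :
  is_vderive (fun s => jacobi1 m1 m2 m3 (a1 s) (a2 s) (a3 s)) t (jacobi1 m1 m2 m3 A1 A2 A3).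
Proof. apply is_vderive_scale_const, is_vderive_sub; auto. Qed.

Lemma is_vderive_jacobi2 :
  is_vderive (fun s => jacobi2 m1 m2 m3 (a1 s) (a2 s) (a3 s)) t (jacobi2 m1 m2 m3 A1 A2 A3).
Proof.
  apply is_vderive_scale_const, is_vderive_sub; [exact D3|].
  apply is_vderive_scale_const, is_vderive_add; apply is_vderive_scale_const; assumption.
Qed.

Local Notation J1 := (jacobi1 m1 m2 m3 (a1 t) (a2 t) (a3 t)).
Local Notation J2 := (jacobi2 m1 m2 m3 (a1 t) (a2 t) (a3 t)).
Local Notation J1' := (jacobi1 m1 m2 m3 A1 A2 A3).
Local Notation J2' := (jacobi2 m1 m2 m3 A1 A2 A3).

Lemma is_derive_shapeX (e : R -> vec3) :
  is_derive (fun s => shapeX m1 m2 m3 (a1 s) (a2 s) (a3 s) (e s)) t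
    (dot J1' J1 + dot J1 J1' - (dot J2' J2 + dot J2 J2')).
Proof.
  apply is_derive_Rminus; apply is_derive_dot;
    first [apply is_vderive_jacobi1 | apply is_vderive_jacobi2].
Qed.

Lemma is_derive_shapeY (e : R -> vec3) :
  is_derive (fun s => shapeY m1 m2 m3 (a1 s) (a2 s) (a3 s) (e s)) t (2 * (dot J1' J2 + dot J1 J2')).
Proof. apply is_derive_scal, is_derive_dot; [apply is_vderive_jacobi1 | apply is_vderive_jacobi2]. Qed.

Lemma moment_derivable : ex_derive (fun s => moment m1 m2 m3 (a1 s) (a2 s) (a3 s)) t.
Proof.
  eexists; apply is_derive_Rplus; [apply is_derive_Rplus|]; apply is_derive_scal, is_derive_dot; eauto.
Qed.

Lemma is_derive_second_moment (v w : R -> vec3) V W : is_vderive v t V -> is_vderive w t W ->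
  is_derive (fun s => second_moment m1 m2 m3 (a1 s) (a2 s) (a3 s) (a1 s) (a2 s) (a3 s) (v s) (w s)) t
    (second_moment m1 m2 m3 A1 A2 A3 (a1 t) (a2 t) (a3 t) (v t) (w t) +
     second_moment m1 m2 m3 (a1 t) (a2 t) (a3 t) A1 A2 A3 (v t) (w t) +
     second_moment m1 m2 m3 (a1 t) (a2 t) (a3 t) (a1 t) (a2 t) (a3 t) V (w t) +
     second_moment m1 m2 m3 (a1 t) (a2 t) (a3 t) (a1 t) (a2 t) (a3 t) (v t) W).
Proof.
  intros Dv Dw; unfold second_moment.
  eapply is_derive_eq;
    [apply is_derive_Rplus; [apply is_derive_Rplus|]; apply is_derive_scal, is_derive_Rmult;
       apply is_derive_dot; eauto | simpl; ring].
Qed.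

Lemma second_moment_vec_vdifferentiable v :
  vdifferentiable_at (fun s => second_moment_vec m1 m2 m3 (a1 s) (a2 s) (a3 s) v) t.
Proof.
  eapply is_vderive_vdifferentiable, is_vderive_add; [apply is_vderive_add|];
    apply is_vderive_scale; eauto; apply is_derive_scal, is_derive_dot; eauto; apply is_vderive_const.
Qed.

End MotionDerivatives.

Lemma continuous_second_moment m1 m2 m3 (a1 a2 a3 v : R -> vec3) t :
  vcontinuous_at a1 t -> vcontinuous_at a2 t -> vcontinuous_at a3 t -> vcontinuous_at v t ->
  continuous (fun s => second_moment m1 m2 m3 (a1 s) (a2 s) (a3 s) (a1 s) (a2 s) (a3 s) (v s) (v s)) t.
Proof.
  intros; unfold second_moment; repeat apply continuous_Rplus;
    apply continuous_Rmult; try apply continuous_Rmult; try apply continuous_dot; auto;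
    apply (continuous_const (_ : R)).
Qed.

(* Near [t] the sign of [lambda2 - lambda1] is fixed, since [(lambda2 - lambda1)^2 = X^2 + Y^2 > 0],
   so [lambda1 = (I - sg * sqrt (X^2 + Y^2)) / 2] for a constant [sg]. *)
Lemma principal_eigenvalue_derivable m1 m2 m3 (a1 a2 a3 e1 e2 e3 : R -> vec3) t :
  0 < m1 -> 0 < m2 -> 0 < m3 -> m1 + m2 + m3 = 1 ->
  locally t (fun s => principal_frame m1 m2 m3 (a1 s) (a2 s) (a3 s) (e1 s) (e2 s) (e3 s)) ->
  vdifferentiable_at a1 t -> vdifferentiable_at a2 t -> vdifferentiable_at a3 t ->
  vcontinuous_at e1 t ->
  0 < shapeX m1 m2 m3 (a1 t) (a2 t) (a3 t) (e3 t) ^ 2 +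
      shapeY m1 m2 m3 (a1 t) (a2 t) (a3 t) (e3 t) ^ 2 ->
  exists lam : R -> R, ex_derive lam t /\
    locally t (fun s => lam s =
      second_moment m1 m2 m3 (a1 s) (a2 s) (a3 s) (a1 s) (a2 s) (a3 s) (e2 s) (e2 s)).
Proof.
  intros Hm1 Hm2 Hm3 Hm LP D1 D2 D3 C1 Hpole.
  pose proof (is_vderive_vderiv _ _ D1) as V1; pose proof (is_vderive_vderiv _ _ D2) as V2;
    pose proof (is_vderive_vderiv _ _ D3) as V3.
  set (S := fun (e : R -> vec3) s =>
         second_moment m1 m2 m3 (a1 s) (a2 s) (a3 s) (a1 s) (a2 s) (a3 s) (e s) (e s)).
  set (M := fun s => moment m1 m2 m3 (a1 s) (a2 s) (a3 s)).
  set (Q := fun s => shapeX m1 m2 m3 (a1 s) (a2 s) (a3 s) (e3 s) ^ 2 +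
                     shapeY m1 m2 m3 (a1 s) (a2 s) (a3 s) (e3 s) ^ 2).
  set (h := fun s => 2 * S e1 s - M s).
  assert (Lh : locally t (fun s => M s = S e1 s + S e2 s /\ Q s = h s ^ 2)).
  { eapply filter_imp; [|exact LP]; intros s Ps.
    pose proof (principal_moment _ _ _ _ _ _ _ _ _ Ps) as EM.
    split; [exact EM|]; unfold Q, h, M, S in *.
    rewrite (principal_shape_radius _ _ _ _ _ _ _ _ _ Hm1 Hm2 Hm3 Hm Ps), EM; ring. }
  assert (Ht : h t <> 0).
  { destruct (locally_singleton _ _ Lh) as [_ E]; fold (Q t) in Hpole; rewrite E in Hpole.
    intros H0; rewrite H0 in Hpole; lra. }
  destruct (moment_derivable m1 m2 m3 a1 a2 a3 t _ _ _ V1 V2 V3) as (dM & DM).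
  destruct (locally_sign_sqrt h Q t) as (sg & _ & Lsg); auto.
  { apply continuous_Rminus; [apply continuous_Rmult; [apply (continuous_const (_ : R))|] |].
    - apply continuous_second_moment; auto; apply vdifferentiable_continuous; auto.
    - exact (ex_derive_continuous M t (ex_intro _ dM DM)). }
  { exact (filter_imp _ _ (fun s H => proj2 H) Lh). }
  exists (fun s => / 2 * (M s - sg * sqrt (Q s))); split.
  - eexists; apply is_derive_scal, is_derive_Rminus; [exact DM|].
    apply is_derive_scal, (is_derive_sqrt Q); [|exact Hpole].
    apply (is_derive_Rplus (fun s => shapeX m1 m2 m3 (a1 s) (a2 s) (a3 s) (e3 s) ^ 2)
                           (fun s => shapeY m1 m2 m3 (a1 s) (a2 s) (a3 s) (e3 s) ^ 2));
      apply is_derive_pow; [exact (is_derive_shapeX _ _ _ _ _ _ _ _ _ _ V1 V2 V3 e3) |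
                            exact (is_derive_shapeY _ _ _ _ _ _ _ _ _ _ V1 V2 V3 e3)].
  - eapply filter_imp; [|exact (filter_and _ _ Lh Lsg)]; intros s [[EM _] [Eh _]].
    cbv beta; rewrite <- Eh; unfold h; rewrite EM; unfold S; field.
Qed.

(* [e1 s] is parallel to the image of the fixed vector [e1 t] under [S - lambda1 P], [P] the
   projection onto the plane of the triangle: this map kills [e2 s] and [e3 s]. *)
Lemma principal_axis_vdifferentiable m1 m2 m3 (a1 a2 a3 e1 e2 e3 : R -> vec3) t :
  0 < m1 -> 0 < m2 -> 0 < m3 -> m1 + m2 + m3 = 1 ->
  locally t (fun s => principal_frame m1 m2 m3 (a1 s) (a2 s) (a3 s) (e1 s) (e2 s) (e3 s)) ->
  vdifferentiable_at a1 t -> vdifferentiable_at a2 t -> vdifferentiable_at a3 t ->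
  vdifferentiable_at e3 t -> vcontinuous_at e1 t ->
  0 < shapeX m1 m2 m3 (a1 t) (a2 t) (a3 t) (e3 t) ^ 2 +
      shapeY m1 m2 m3 (a1 t) (a2 t) (a3 t) (e3 t) ^ 2 ->
  vdifferentiable_at e1 t.
Proof.
  intros Hm1 Hm2 Hm3 Hm LP D1 D2 D3 Dn C1 Hpole.
  destruct (principal_eigenvalue_derivable m1 m2 m3 a1 a2 a3 e1 e2 e3 t Hm1 Hm2 Hm3 Hm LP
              D1 D2 D3 C1 Hpole) as (lam & (dlam & Dlam) & Llam).
  pose proof (is_vderive_vderiv _ _ D1) as V1; pose proof (is_vderive_vderiv _ _ D2) as V2;
    pose proof (is_vderive_vderiv _ _ D3) as V3; pose proof (is_vderive_vderiv _ _ Dn) as VN.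
  set (S := fun (e : R -> vec3) s =>
         second_moment m1 m2 m3 (a1 s) (a2 s) (a3 s) (a1 s) (a2 s) (a3 s) (e s) (e s)).
  assert (Ht : S e1 t - S e2 t <> 0).
  { intros H0; unfold S in H0.
    rewrite (principal_shape_radius _ _ _ _ _ _ _ _ _ Hm1 Hm2 Hm3 Hm (locally_singleton _ _ LP)), H0
      in Hpole; lra. }
  set (v := e1 t).
  set (w := fun s => vsub (second_moment_vec m1 m2 m3 (a1 s) (a2 s) (a3 s) v)
                       (vscale (lam s) (vsub v (vscale (dot (e3 s) v) (e3 s))))).
  assert (Lw : locally t (fun s => w s = vscale ((S e1 s - S e2 s) * dot v (e1 s)) (e1 s))).
  { eapply filter_imp; [|exact (filter_and _ _ LP Llam)]; intros s [Ps El]; unfold w; rewrite El.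
    exact (principal_second_moment_vec _ _ _ _ _ _ _ _ _ Ps v). }
  apply (unit_parallel_vdifferentiable w e1 t); [| exact C1 | |].
  - unfold w; eapply is_vderive_vdifferentiable, is_vderive_sub;
      [exact (is_vderive_vderiv _ _
                (second_moment_vec_vdifferentiable _ _ _ _ _ _ _ _ _ _ V1 V2 V3 v)) |].
    apply is_vderive_scale; [exact Dlam|].
    apply is_vderive_sub; [apply is_vderive_const|].
    apply is_vderive_scale; [|exact VN].
    eapply is_derive_dot; [exact VN | apply is_vderive_const].
  - rewrite (locally_singleton _ _ Lw); intros E.
    destruct (locally_singleton _ _ LP) as ((F11 & _) & _).
    apply (f_equal (fun u => dot u (e1 t))) in E.
    unfold v in E; rewrite dot_vscale_l, dot_vzero_l, F11 in E; apply Ht; lra.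
  - eapply filter_imp; [|exact (filter_and _ _ LP Lw)]; intros s [((F11 & _) & _) E].
    rewrite E; split; [exact F11 | apply cross_vscale_eq0].
Qed.

Lemma principal_frame_vdifferentiable m1 m2 m3 (a1 a2 a3 e1 e2 e3 : R -> vec3) t :
  0 < m1 -> 0 < m2 -> 0 < m3 -> m1 + m2 + m3 = 1 ->
  locally t (fun s => principal_frame m1 m2 m3 (a1 s) (a2 s) (a3 s) (e1 s) (e2 s) (e3 s)) ->
  nondegenerate (a1 t) (a2 t) (a3 t) ->
  vdifferentiable_at a1 t -> vdifferentiable_at a2 t -> vdifferentiable_at a3 t ->
  vcontinuous_at e1 t -> vcontinuous_at e3 t ->
  0 < shapeX m1 m2 m3 (a1 t) (a2 t) (a3 t) (e3 t) ^ 2 +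
      shapeY m1 m2 m3 (a1 t) (a2 t) (a3 t) (e3 t) ^ 2 ->
  vdifferentiable_at e1 t /\ vdifferentiable_at e2 t /\ vdifferentiable_at e3 t.
Proof.
  intros Hm1 Hm2 Hm3 Hm LP ND D1 D2 D3 C1 C3 Hpole.
  assert (LN : forall p q : R -> vec3,
    (forall s, principal_frame m1 m2 m3 (a1 s) (a2 s) (a3 s) (e1 s) (e2 s) (e3 s) ->
       dot (e3 s) (p s) = 0 /\ dot (e3 s) (q s) = 0) ->
    locally t (fun s => dot (e3 s) (e3 s) = 1 /\ dot (e3 s) (p s) = 0 /\ dot (e3 s) (q s) = 0)).
  { intros p q H; eapply filter_imp; [|exact LP]; intros s Ps.
    split; [destruct Ps as ((_ & _ & F33 & _) & _); exact F33 | exact (H s Ps)]. }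
  assert (Dn : vdifferentiable_at e3 t).
  { destruct ND as [ND | [ND | ND]];
      [apply (unit_normal_vdifferentiable a1 a2 e3 t D1 D2 C3 ND) |
       apply (unit_normal_vdifferentiable a2 a3 e3 t D2 D3 C3 ND) |
       apply (unit_normal_vdifferentiable a1 a3 e3 t D1 D3 C3 ND)];
      apply LN; intros s (_ & N1 & N2 & N3 & _); split; assumption. }
  assert (Du1 : vdifferentiable_at e1 t)
    by exact (principal_axis_vdifferentiable m1 m2 m3 a1 a2 a3 e1 e2 e3 t Hm1 Hm2 Hm3 Hm LP
                D1 D2 D3 Dn C1 Hpole).
  split; [exact Du1 | split; [|exact Dn]].
  eapply is_vderive_vdifferentiable, (is_vderive_ext_loc (fun s => cross (e3 s) (e1 s)));
    [| exact (is_vderive_cross _ _ _ _ _ (is_vderive_vderiv _ _ Dn) (is_vderive_vderiv _ _ Du1))].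
  eapply filter_imp; [|exact LP]; intros s (F & _); exact (frame_cross31 _ _ _ F).
Qed.

Lemma principal_frame_velocity_of_motion m1 m2 m3 (a1 a2 a3 e1 e2 e3 : R -> vec3) t
    A1 A2 A3 U1 U2 N :
  locally t (fun s => principal_frame m1 m2 m3 (a1 s) (a2 s) (a3 s) (e1 s) (e2 s) (e3 s)) ->
  is_vderive a1 t A1 -> is_vderive a2 t A2 -> is_vderive a3 t A3 ->
  is_vderive e1 t U1 -> is_vderive e2 t U2 -> is_vderive e3 t N ->
  principal_frame_velocity m1 m2 m3 (a1 t) (a2 t) (a3 t) (e1 t) (e2 t) (e3 t) A1 A2 A3 U1 U2 N.
Proof.
  intros LP V1 V2 V3 W1 W2 W3.
  assert (K : forall (p q : R -> vec3) P Q c, is_vderive p t P -> is_vderive q t Q ->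
    (forall s, principal_frame m1 m2 m3 (a1 s) (a2 s) (a3 s) (e1 s) (e2 s) (e3 s) ->
       dot (p s) (q s) = c) ->
    dot P (q t) + dot (p t) Q = 0)
    by (intros p q P Q c Vp Vq H;
        exact (dot_velocity_locally_const p q t P Q c (filter_imp _ _ H LP) Vp Vq)).
  assert (K1 : dot U1 (e1 t) + dot (e1 t) U1 = 0)
    by (apply (K e1 e1 U1 U1 1 W1 W1); intros s ((F11 & _) & _); exact F11).
  assert (K2 : dot U2 (e2 t) + dot (e2 t) U2 = 0)
    by (apply (K e2 e2 U2 U2 1 W2 W2); intros s ((_ & F22 & _) & _); exact F22).
  assert (K3 : dot N (e3 t) + dot (e3 t) N = 0)
    by (apply (K e3 e3 N N 1 W3 W3); intros s ((_ & _ & F33 & _) & _); exact F33).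
  rewrite (dot_comm (e1 t)) in K1; rewrite (dot_comm (e2 t)) in K2; rewrite (dot_comm (e3 t)) in K3.
  repeat split; try lra.
  - apply (K e1 e2 U1 U2 0 W1 W2); intros s ((_ & _ & _ & F12 & _) & _); exact F12.
  - apply (K e1 e3 U1 N 0 W1 W3); intros s ((_ & _ & _ & _ & F13 & _) & _); exact F13.
  - apply (K e2 e3 U2 N 0 W2 W3); intros s ((_ & _ & _ & _ & _ & F23 & _) & _); exact F23.
  - apply (K e3 a1 N A1 0 W3 V1); intros s (_ & N1 & _); exact N1.
  - apply (K e3 a2 N A2 0 W3 V2); intros s (_ & _ & N2 & _); exact N2.
  - apply (K e3 a3 N A3 0 W3 V3); intros s (_ & _ & _ & N3 & _); exact N3.
  - apply (is_vderive_locally_const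
             (fun s => vadd (vadd (vscale m1 (a1 s)) (vscale m2 (a2 s))) (vscale m3 (a3 s))) t vzero).
    + eapply filter_imp; [|exact LP]; intros s (_ & _ & _ & _ & C & _); exact C.
    + apply is_vderive_add; [apply is_vderive_add|]; apply is_vderive_scale_const; assumption.
  - apply (is_derive_locally_const (fun s => second_moment m1 m2 m3 (a1 s) (a2 s) (a3 s)
                                      (a1 s) (a2 s) (a3 s) (e1 s) (e2 s)) t 0).
    + eapply filter_imp; [|exact LP]; intros s (_ & _ & _ & _ & _ & S12); exact S12.
    + exact (is_derive_second_moment m1 m2 m3 a1 a2 a3 t A1 A2 A3 V1 V2 V3 e1 e2 U1 U2 W1 W2).
Qed.

Lemma longitude_rate (X Y th : R -> R) t dX dY dth r :
  is_derive X t dX -> is_derive Y t dY -> is_derive th t dth ->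
  locally t (fun s => X s * sin (th s) - Y s * cos (th s) = 0) ->
  X t = r * cos (th t) -> Y t = r * sin (th t) ->
  dth * (X t ^ 2 + Y t ^ 2) = X t * dY - Y t * dX.
Proof.
  intros DX DY DT L EX EY.
  assert (D : dX * sin (th t) + X t * (cos (th t) * dth) -
              (dY * cos (th t) + Y t * (- sin (th t) * dth)) = 0).
  { apply (is_derive_locally_const _ t 0 _ L).
    eapply is_derive_eq; [apply is_derive_Rminus; apply is_derive_Rmult; try eassumption |].
    - apply (is_derive_comp sin th); [apply is_derive_sin | exact DT].
    - apply (is_derive_comp cos th); [apply is_derive_cos | exact DT].
    - simpl; unfold scal; simpl; unfold mult; simpl; ring. }
  rewrite EX, EY in *.
  transitivity (r * r * dth * ((sin (th t))² + (cos (th t))²)); [unfold Rsqr; ring|].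
  apply Rminus_diag_uniq; match type of D with ?E = 0 =>
    transitivity (r * E); [unfold Rsqr; ring | rewrite D; ring] end.
Qed.

Theorem theoremD :
  forall (m1 m2 m3 : R), 0 < m1 -> 0 < m2 -> 0 < m3 -> m1 + m2 + m3 = 1 ->
  forall (ta tb : R), ta < tb ->
  forall (a1 a2 a3 n u1 u2 : R -> vec3) (theta : R -> R) (Om : vec3),
  (* Gamma(t) = (X(t), n(t)) is a motion of nondegenerate oriented m-triangles *)
  (forall t, ta < t < tb ->
     oriented_mtriangle m1 m2 m3 (a1 t) (a2 t) (a3 t) (n t) /\
     nondegenerate (a1 t) (a2 t) (a3 t)) ->
  (* the motion is differentiable *)
  (forall t, ta < t < tb ->
     vdifferentiable_at a1 t /\ vdifferentiable_at a2 t /\ vdifferentiable_at a3 t) ->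
  (* with constant angular momentum Om *)
  (forall t, ta < t < tb -> ang_mom m1 m2 m3 a1 a2 a3 t = Om) ->
  (* F(t) = (u1(t), u2(t), n(t)) is a continuously varying moving eigenframe *)
  (forall t, ta < t < tb ->
     is_eigenframe m1 m2 m3 (a1 t) (a2 t) (a3 t) (u1 t) (u2 t) (n t)) ->
  (forall t, ta < t < tb ->
     vcontinuous_at u1 t /\ vcontinuous_at u2 t /\ vcontinuous_at n t) ->
  (* the moduli curve stays off the poles, where the longitude is defined *)
  (forall t, ta < t < tb ->
     0 < (shapeX m1 m2 m3 (a1 t) (a2 t) (a3 t) (n t)) ^ 2
         + (shapeY m1 m2 m3 (a1 t) (a2 t) (a3 t) (n t)) ^ 2) ->
  (* theta(t) is a differentiable longitude along the moduli curve *)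
  (forall t, ta < t < tb -> ex_derive theta t /\ is_longitude_at m1 m2 m3 a1 a2 a3 n theta t) ->
  forall t, ta < t < tb ->
  let g1 := fun s => dot Om (u1 s) in
  let g2 := fun s => dot Om (u2 s) in
  let g3 := fun s => dot Om (n s) in
  let l1 := inertia m1 m2 m3 (a1 t) (a2 t) (a3 t) (u1 t) (u1 t) in
  let l2 := inertia m1 m2 m3 (a1 t) (a2 t) (a3 t) (u2 t) (u2 t) in
  let l3 := inertia m1 m2 m3 (a1 t) (a2 t) (a3 t) (n t) (n t) in
  let rho := size_rho m1 m2 m3 (a1 t) (a2 t) (a3 t) in
  let phi := colatitude m1 m2 m3 (a1 t) (a2 t) (a3 t) (n t) in
  (* the eigenvalues depend only on the moduli curve (rho, phi, theta) *)
  (l3 = rho ^ 2 /\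
   ((l1 = rho ^ 2 / 2 * (1 + sin phi) /\ l2 = rho ^ 2 / 2 * (1 - sin phi)) \/
    (l1 = rho ^ 2 / 2 * (1 - sin phi) /\ l2 = rho ^ 2 / 2 * (1 + sin phi)))) /\
  (* the Euler-type equations *)
  is_derive g1 t (g2 t * ((/ l3 - / l2) * g3 t + / 2 * Derive theta t * cos phi)) /\
  is_derive g2 t (g1 t * ((/ l1 - / l3) * g3 t - / 2 * Derive theta t * cos phi)) /\
  is_derive g3 t (g1 t * g2 t * (/ l2 - / l1)).
Proof.
  intros m1 m2 m3 Hm1 Hm2 Hm3 Hm ta tb _ a1 a2 a3 n u1 u2 theta Om Htri Hdiff HOm Hfr Hcont
    Hpole Hlong t Ht g1 g2 g3 l1 l2 l3 rho phi.
  pose proof (locally_open_interval ta tb t Ht) as Lt.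
  assert (LP : locally t (fun s => principal_frame m1 m2 m3 (a1 s) (a2 s) (a3 s) (u1 s) (u2 s) (n s)))
    by (eapply filter_imp; [|exact Lt]; intros s Hs;
        apply eigenframe_principal_frame; [apply Htri | apply Hfr]; exact Hs).
  pose proof (locally_singleton _ _ LP) as P.
  destruct (Htri t Ht) as [_ ND], (Hdiff t Ht) as (D1 & D2 & D3), (Hcont t Ht) as (C1 & _ & Cn).
  destruct (principal_frame_vdifferentiable m1 m2 m3 a1 a2 a3 u1 u2 n t Hm1 Hm2 Hm3 Hm LP ND
              D1 D2 D3 C1 Cn (Hpole t Ht)) as (Du1 & Du2 & Dn).
  apply is_vderive_vderiv in D1, D2, D3, Du1, Du2, Dn.
  pose proof (principal_frame_velocity_of_motion m1 m2 m3 a1 a2 a3 u1 u2 n t _ _ _ _ _ _ LP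
                D1 D2 D3 Du1 Du2 Dn) as V.
  assert (LX : locally t (fun s => shapeX m1 m2 m3 (a1 s) (a2 s) (a3 s) (n s) * sin (theta s) -
                                   shapeY m1 m2 m3 (a1 s) (a2 s) (a3 s) (n s) * cos (theta s) = 0))
    by (eapply filter_imp; [|exact Lt]; intros s Hs; destruct (Hlong s Hs) as (_ & -> & ->); ring).
  destruct (Hlong t Ht) as (Dth & EX & EY); apply Derive_correct in Dth.
  pose proof (longitude_rate _ _ theta t _ _ _ _
                (is_derive_shapeX m1 m2 m3 a1 a2 a3 t _ _ _ D1 D2 D3 n)
                (is_derive_shapeY m1 m2 m3 a1 a2 a3 t _ _ _ D1 D2 D3 n) Dth LX EX EY) as Hth.
  destruct (euler_frame_equations m1 m2 m3 (a1 t) (a2 t) (a3 t) (u1 t) (u2 t) (n t) _ _ _ _ _ _ Om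
              (Derive theta t) Hm1 Hm2 Hm3 Hm P V ND (eq_sym (HOm t Ht)) (Hpole t Ht) Hth)
    as (E1 & E2 & E3).
  split; [exact (principal_eigenvalues _ _ _ _ _ _ _ _ _ Hm1 Hm2 Hm3 Hm P ND)|].
  split; [|split]; (eapply is_derive_eq; [apply is_derive_dot_const; eassumption|]);
    [exact E1 | exact E2 | exact E3].
Qed.
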